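(* Let $(L,\vee,\wedge,0,1)$ be a complemented modular lattice with $0\ne1$ and $a,b,c\in L$. Then $a\odot b\le\{c\}$ if and only if $\{a\}\le b\to c$.
   Context: For $a\in L$, $a^+:=\{x\in L\mid a\vee x=1,\ a\wedge x=0\}$ (the set of all complements of $a$). Define $a\odot b:=\{b\wedge(a\vee x)\mid x\in b^+\}$ and $a\to b:=\{x\vee(a\wedge b)\mid x\in a^+\}$. For $A,B\subseteq L$, $A\le B$ means $x\le y$ for all $x\in A$ and all $y\in B$. *)

From HB Require Import structures.
From mathcomp Require Import all_boot all_order.
Set Implicit Arguments. Unset Strict Implicit. Unset Printing Implicit Defensive.
Import Order.TTheory.
Local Open Scope order_scope.

Definition modular_lattice {d} (L : tbLatticeType d) : Prop :=
  forall x y z : L, x <= z -> x `|` (y `&` z) = (x `|` y) `&` z.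

Definition compls {d} {L : tbLatticeType d} (a : L) : L -> Prop :=
  fun x => a `|` x = \top /\ a `&` x = \bot.

Definition complemented_lattice {d} (L : tbLatticeType d) : Prop :=
  forall a : L, exists x, compls a x.

Definition odot {d} {L : tbLatticeType d} (a b : L) : L -> Prop :=
  fun y => exists x, compls b x /\ y = b `&` (a `|` x).

Definition arrow {d} {L : tbLatticeType d} (a b : L) : L -> Prop :=
  fun y => exists x, compls a x /\ y = x `|` (a `&` b).

Definition set_le {d} {L : tbLatticeType d} (A B : L -> Prop) : Prop :=
  forall x y, A x -> B y -> x <= y.

Definition sing {d} {L : tbLatticeType d} (c : L) : L -> Prop := fun y => y = c.

From HB Require Import structures.
From mathcomp Require Import all_boot all_order.
Import Order.TTheory.
Local Open Scope order_scope.

(* For a complement z of b in a modular lattice, x |-> z `|` x and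
   y |-> b `&` y are mutually inverse between the intervals [0, b] and [z, 1].
   Hence b `&` (a `|` z) <= c iff a <= z `|` (b `&` c), and the theorem is this
   equivalence quantified over all complements z of b. *)

Section ModularComplement.

Variables (d : Order.disp_t) (L : tbLatticeType d).
Hypothesis Hmod : modular_lattice L.

Lemma compl_join_meetK {b z y : L} :
  b `|` z = \top -> z <= y -> z `|` (b `&` y) = y.
Proof. by move=> bz1 zy; rewrite Hmod // joinC bz1 meet1x. Qed.

Lemma compl_meet_joinK {b z x : L} :
  b `&` z = \bot -> x <= b -> b `&` (z `|` x) = x.
Proof. by move=> bz0 xb; rewrite meetC joinC -Hmod // meetC bz0 joinx0. Qed.

Lemma compl_meet_join_le (a b c z : L) :
  compls b z -> (b `&` (a `|` z) <= c) = (a <= z `|` (b `&` c)).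
Proof.
case=> bz1 bz0; apply/idP/idP => [le_bazc | le_azbc].
- have le_baz_bc : b `&` (a `|` z) <= b `&` c by rewrite lexI leIl le_bazc.
  rewrite (le_trans (leUl a z)) // -[a `|` z](compl_join_meetK bz1 (leUr z a)).
  exact: leU2 (lexx z) le_baz_bc.
- have le_az_zbc : a `|` z <= z `|` (b `&` c) by rewrite leUx le_azbc leUl.
  rewrite (le_trans _ (leIr c b)) // -(compl_meet_joinK bz0 (leIl b c)).
  exact: leI2 (lexx b) le_az_zbc.
Qed.

End ModularComplement.

Theorem theorem5 (d : Order.disp_t) (L : tbLatticeType d)
  (Hmod : modular_lattice L) (Hcompl : complemented_lattice L)
  (H01 : (\bot : L) <> \top) (a b c : L) :
  set_le (odot a b) (sing c) <-> set_le (sing a) (arrow b c).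
Proof.
split=> [odot_le | le_arrow].
- move=> _ _ -> [z [bz ->]]; rewrite -compl_meet_join_le //.
  by apply: odot_le => //; exists z.
- move=> _ _ [z [bz ->]] ->; rewrite compl_meet_join_le //.
  by apply: le_arrow => //; exists z.
Qed.
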